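(* On $\mathbb{R}^3$ with coordinates $(x,y,z)$ (the Heisenberg group $H_3$), let $\theta^1 = x\,dy + dz$, $\theta^2 = dy$, $\theta^3 = dx$. For arbitrary positive constants $A,B,C$, consider the left-invariant Lorentzian metric $$g = A\,(\theta^1)^2 + B\,(\theta^2)^2 - C\,(\theta^3)^2 .$$ Then there exist a smooth vector field $X$ on $\mathbb{R}^3$ and a constant $\alpha<0$ such that $$2\,\mathrm{Ric}[g] + L_X g + \alpha\, g = 0 .$$ That is, every such metric is a shrinking Lorentzian Ricci soliton.
   Context: $L_X$ denotes the Lie derivative along $X$. A Ricci soliton with $\alpha<0$ in the equation $2\,\mathrm{Ric}[g] + L_X g + \alpha g = 0$ is called shrinking. *)

From Stdlib Require Import Reals Lra Classical ClassicalEpsilon.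
Open Scope R_scope.

(** Points of R^3 = H_3, coordinates (x,y,z) indexed 0,1,2. *)
Definition pt : Type := (R * R * R)%type.

Definition coord (p : pt) (i : nat) : R :=
  match p with (x, y, z) =>
    match i with 0%nat => x | 1%nat => y | _ => z end end.

Definition shift (p : pt) (i : nat) (h : R) : pt :=
  match p with (x, y, z) =>
    match i with 0%nat => (x + h, y, z) | 1%nat => (x, y + h, z)
            | _ => (x, y, z + h) end end.

Definition has_pd (f : pt -> R) (i : nat) (p : pt) (l : R) : Prop :=
  derivable_pt_lim (fun t => f (shift p i t)) 0 l.

(** The partial derivative (the true one whenever it exists; 0 otherwise). *)
Definition pd (f : pt -> R) (i : nat) (p : pt) : R :=
  match excluded_middle_informative (exists l, has_pd f i p l) with
  | left H => proj1_sig (constructive_indefinite_description _ H)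
  | right _ => 0
  end.

Definition cont_at (f : pt -> R) (p : pt) : Prop :=
  forall eps, 0 < eps -> exists delta, 0 < delta /\
    forall q, Rabs (coord q 0 - coord p 0) < delta ->
              Rabs (coord q 1 - coord p 1) < delta ->
              Rabs (coord q 2 - coord p 2) < delta ->
              Rabs (f q - f p) < eps.

Fixpoint iter_pd (l : list nat) (f : pt -> R) : pt -> R :=
  match l with
  | nil => f
  | cons i l' => pd (iter_pd l' f) i
  end.

Definition smooth (f : pt -> R) : Prop :=
  forall (l : list nat) (p : pt),
    cont_at (iter_pd l f) p /\
    forall i, (i < 3)%nat -> exists d, has_pd (iter_pd l f) i p d.

Definition sum3 (f : nat -> R) : R := f 0%nat + f 1%nat + f 2%nat.

Definition covec := nat -> pt -> R.
Definition tensor2 := nat -> nat -> pt -> R.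
Definition vfield := nat -> pt -> R.

Definition theta1 : covec := fun i p =>
  match i with 0%nat => 0 | 1%nat => coord p 0 | 2%nat => 1 | _ => 0 end.
Definition theta2 : covec := fun i p =>
  match i with 1%nat => 1 | _ => 0 end.
Definition theta3 : covec := fun i p =>
  match i with 0%nat => 1 | _ => 0 end.

Definition heis_metric (A B C : R) : tensor2 := fun i j p =>
  A * theta1 i p * theta1 j p + B * theta2 i p * theta2 j p
  - C * theta3 i p * theta3 j p.

(** Inverse of a 3x3 metric via the adjugate (indices mod 3). *)
Definition m3 (k : nat) : nat := Nat.modulo k 3.

Definition det3 (g : tensor2) (p : pt) : R :=
  sum3 (fun j => g 0%nat j p *
    (g 1%nat (m3 (j+1)) p * g 2%nat (m3 (j+2)) p
     - g 1%nat (m3 (j+2)) p * g 2%nat (m3 (j+1)) p)).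

Definition inv_metric (g : tensor2) : tensor2 := fun i j p =>
  (g (m3 (j+1)) (m3 (i+1)) p * g (m3 (j+2)) (m3 (i+2)) p
   - g (m3 (j+1)) (m3 (i+2)) p * g (m3 (j+2)) (m3 (i+1)) p) / det3 g p.

Definition christoffel (g : tensor2) (k i j : nat) (p : pt) : R :=
  / 2 * sum3 (fun l => inv_metric g k l p *
     (pd (g j l) i p + pd (g i l) j p - pd (g i j) l p)).

Definition ricci (g : tensor2) : tensor2 := fun i j p =>
  sum3 (fun k =>
    pd (christoffel g k i j) k p - pd (christoffel g k i k) j p
    + sum3 (fun l => christoffel g k k l p * christoffel g l i j p
                    - christoffel g k j l p * christoffel g l i k p)).

Definition lie_deriv (X : vfield) (g : tensor2) : tensor2 := fun i j p =>
  sum3 (fun k => X k p * pd (g i j) k p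
                 + g k j p * pd (X k) i p + g i k p * pd (X k) j p).

(* In the coordinates (x, y, z) every component of g is a
   polynomial of degree at most 2 in x alone, and so are the Christoffel
   symbols: det g = -ABC is constant, so the inverse metric is again
   polynomial in x, and the Christoffel symbols turn out to be affine in x.
   Hence every partial derivative occurring in Ric[g] is the derivative of
   a polynomial a + b x + c x^2, computed once and for all in
   [pd_quadratic].  With K = A / (B C), the linear vector field
   X = K (x d/dx + y d/dy + 2 z d/dz) and alpha = -3K satisfy
   2 Ric[g] + L_X g + alpha g = 0: once all derivatives are evaluated this
   is a rational identity in A, B, C, x for each of the nine index pairs.
   The components of X are affine functions, which are smooth
   ([affine_smooth]). *)

From Stdlib Require Import Reals Lra Lia FunctionalExtensionality ClassicalEpsilon.
Open Scope R_scope.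

Lemma pd_unique f i p l : has_pd f i p l -> pd f i p = l.
Proof.
  intros Hl. unfold pd. destruct excluded_middle_informative as [Hex | Hnex].
  - destruct constructive_indefinite_description as [l' Hl']; simpl.
    exact (uniqueness_limite _ _ _ _ Hl' Hl).
  - exfalso; apply Hnex; eauto.
Qed.

Lemma derivable_pt_lim_quadratic f u v w t0 l :
  (forall t, f t = u + v * t + w * t * t) -> l = v + 2 * w * t0 ->
  derivable_pt_lim f t0 l.
Proof.
  intros Hf ->. replace f with (fun t => u + v * t + w * t * t)
    by (extensionality t; now rewrite Hf).
  pose proof (derivable_pt_lim_plus _ _ t0 _ _
    (derivable_pt_lim_plus _ _ t0 _ _ (derivable_pt_lim_const u t0)
       (derivable_pt_lim_scal _ v t0 _ (derivable_pt_lim_id t0)))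
    (derivable_pt_lim_mult _ _ t0 _ _
       (derivable_pt_lim_scal _ w t0 _ (derivable_pt_lim_id t0))
       (derivable_pt_lim_id t0))) as H.
  unfold plus_fct, mult_fct, mult_real_fct, fct_cte, id in H.
  replace (v + 2 * w * t0) with (0 + v * 1 + (w * 1 * t0 + w * t0 * 1)) by ring.
  exact H.
Qed.

Lemma has_pd_of_affine_line f i p u v :
  (forall t, f (shift p i t) = u + v * t) -> has_pd f i p v.
Proof.
  intros Hf. unfold has_pd.
  apply (derivable_pt_lim_quadratic _ u v 0); [intros t; rewrite Hf | ]; ring.
Qed.

Definition quadratic (abc : R * R * R) (p : pt) : R :=
  let '(a, b, c) := abc in a + b * coord p 0 + c * coord p 0 * coord p 0.

Definition quadratic_dx (abc : R * R * R) (p : pt) : R :=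
  let '(a, b, c) := abc in b + 2 * c * coord p 0.

Lemma pd_quadratic abc m p :
  pd (quadratic abc) m p = match m with 0%nat => quadratic_dx abc p | _ => 0 end.
Proof.
  apply pd_unique. destruct abc as [[a b] c], p as [[x y] z].
  destruct m as [|[|m]].
  - unfold has_pd; simpl.
    apply (derivable_pt_lim_quadratic _ (a + b * x + c * x * x) (b + 2 * c * x) c);
      [intros t; simpl |]; ring.
  - apply (has_pd_of_affine_line _ _ _ (a + b * x + c * x * x)); intros t; simpl; ring.
  - apply (has_pd_of_affine_line _ _ _ (a + b * x + c * x * x)); intros t; simpl; ring.
Qed.

Definition affine (a b c d : R) (p : pt) : R :=
  a * coord p 0 + b * coord p 1 + c * coord p 2 + d.

Definition affine_slope (a b c : R) (m : nat) : R :=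
  match m with 0%nat => a | 1%nat => b | _ => c end.

Lemma has_pd_affine a b c d m p :
  has_pd (affine a b c d) m p (affine_slope a b c m).
Proof.
  apply (has_pd_of_affine_line _ _ _ (affine a b c d p)).
  destruct p as [[x y] z]; destruct m as [|[|m]]; intros t; unfold affine; simpl; ring.
Qed.

Lemma pd_affine a b c d m p : pd (affine a b c d) m p = affine_slope a b c m.
Proof. apply pd_unique, has_pd_affine. Qed.

(* Affine functions are Lipschitz in the sup-norm, hence continuous. *)
Lemma affine_cont a b c d p : cont_at (affine a b c d) p.
Proof.
  intros eps Heps.
  set (M := Rabs a + Rabs b + Rabs c + 1).
  assert (HM : 0 < M)
    by (unfold M; pose proof (Rabs_pos a); pose proof (Rabs_pos b);
        pose proof (Rabs_pos c); lra).
  exists (eps / M); split; [apply Rdiv_lt_0_compat; lra|].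
  intros q H0 H1 H2.
  assert (Hdiff : affine a b c d q - affine a b c d p =
    a * (coord q 0 - coord p 0) + b * (coord q 1 - coord p 1)
    + c * (coord q 2 - coord p 2)) by (unfold affine; ring).
  assert (Hbound : forall k u, Rabs u < eps / M -> Rabs (k * u) <= Rabs k * (eps / M)).
  { intros k u Hu. rewrite Rabs_mult.
    apply Rmult_le_compat_l; [apply Rabs_pos | lra]. }
  rewrite Hdiff.
  eapply Rle_lt_trans; [apply Rabs_triang|].
  eapply Rle_lt_trans;
    [apply Rplus_le_compat; [apply Rabs_triang | apply (Hbound c _ H2)]|].
  pose proof (Hbound a _ H0); pose proof (Hbound b _ H1).
  assert (0 < eps / M) by (apply Rdiv_lt_0_compat; lra).
  assert (Heq : eps = Rabs a * (eps / M) + Rabs b * (eps / M) + Rabs c * (eps / M)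
                      + eps / M) by (unfold M in *; field; lra).
  lra.
Qed.

Lemma iter_pd_affine a b c d l :
  exists a' b' c' d', iter_pd l (affine a b c d) = affine a' b' c' d'.
Proof.
  induction l as [|i l IH]; simpl; [eauto|].
  destruct IH as (a' & b' & c' & d' & ->).
  exists 0, 0, 0, (affine_slope a' b' c' i).
  extensionality q. rewrite pd_affine. unfold affine; ring.
Qed.

Lemma affine_smooth a b c d : smooth (affine a b c d).
Proof.
  intros l p. destruct (iter_pd_affine a b c d l) as (a' & b' & c' & d' & ->).
  split; [apply affine_cont|].
  intros i _. eexists; apply has_pd_affine.
Qed.

Definition soliton_field (K : R) : vfield := fun k =>
  match k with
  | O => affine K 0 0 0
  | S O => affine 0 K 0 0
  | _ => affine 0 0 (2 * K) 0
  end.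

Section HeisenbergMetric.

Variables A B C : R.
Hypotheses (hA : 0 < A) (hB : 0 < B) (hC : 0 < C).

Definition metric_coeffs (i j : nat) : R * R * R :=
  match i, j with
  | O, O => (-C, 0, 0)
  | S O, S O => (B, 0, A)
  | S O, S (S O) | S (S O), S O => (0, A, 0)
  | S (S O), S (S O) => (A, 0, 0)
  | _, _ => (0, 0, 0)
  end.

Lemma heis_metric_quadratic i j :
  heis_metric A B C i j = quadratic (metric_coeffs i j).
Proof.
  extensionality p. unfold heis_metric, theta1, theta2, theta3.
  destruct i as [|[|[|i]]], j as [|[|[|j]]]; simpl; ring.
Qed.

Lemma det_heis_metric p : det3 (heis_metric A B C) p = - (A * B * C).
Proof.
  unfold det3, sum3, m3; simpl. rewrite !heis_metric_quadratic; simpl. ring.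
Qed.

Definition christoffel_coeffs (k i j : nat) : R * R * R :=
  match k, i, j with
  | O, S O, S O => (0, A / C, 0)
  | O, S O, S (S O) | O, S (S O), S O => (A / (2 * C), 0, 0)
  | S O, O, S O | S O, S O, O => (0, A / (2 * B), 0)
  | S O, O, S (S O) | S O, S (S O), O => (A / (2 * B), 0, 0)
  | S (S O), O, S O | S (S O), S O, O => (/ 2, 0, - A / (2 * B))
  | S (S O), O, S (S O) | S (S O), S (S O), O => (0, - A / (2 * B), 0)
  | _, _, _ => (0, 0, 0)
  end.

Lemma christoffel_heis k i j : (k < 3)%nat -> (i < 3)%nat -> (j < 3)%nat ->
  christoffel (heis_metric A B C) k i j = quadratic (christoffel_coeffs k i j).
Proof.
  intros hk hi hj. extensionality p.
  unfold christoffel, inv_metric, sum3, m3. rewrite !det_heis_metric.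
  rewrite !heis_metric_quadratic, !pd_quadratic.
  destruct k as [|[|[|k]]]; try lia; destruct i as [|[|[|i]]]; try lia;
    destruct j as [|[|[|j]]]; try lia; simpl; field; lra.
Qed.

Lemma heis_soliton_equation i j p : (i < 3)%nat -> (j < 3)%nat ->
  2 * ricci (heis_metric A B C) i j p
  + lie_deriv (soliton_field (A / (B * C))) (heis_metric A B C) i j p
  + (-3 * (A / (B * C))) * heis_metric A B C i j p = 0.
Proof.
  intros hi hj. unfold ricci, lie_deriv, sum3.
  rewrite !christoffel_heis by lia.
  rewrite !heis_metric_quadratic, !pd_quadratic.
  unfold soliton_field; rewrite !pd_affine.
  destruct i as [|[|[|i]]]; try lia; destruct j as [|[|[|j]]]; try lia;
    destruct p as [[x y] z]; unfold affine; simpl; field; lra.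
Qed.

End HeisenbergMetric.

Theorem mainTheorem2 (A B C : R) (hA : 0 < A) (hB : 0 < B) (hC : 0 < C) :
  exists (X : vfield) (alpha : R),
    (forall k, (k < 3)%nat -> smooth (X k)) /\
    alpha < 0 /\
    forall (i j : nat) (p : pt), (i < 3)%nat -> (j < 3)%nat ->
      2 * ricci (heis_metric A B C) i j p
      + lie_deriv X (heis_metric A B C) i j p
      + alpha * heis_metric A B C i j p = 0.
Proof.
  assert (HK : 0 < A / (B * C)) by (apply Rdiv_lt_0_compat; nra).
  exists (soliton_field (A / (B * C))), (-3 * (A / (B * C))).
  split; [|split].
  - intros [|[|k]] _; apply affine_smooth.
  - lra.
  - intros i j p hi hj. now apply heis_soliton_equation.
Qed.
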